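(* The functions $\operatorname{IsCode}(n)$, $\operatorname{Len}(n)$, $\operatorname{SymbolAt}(n,i)$, $\operatorname{Concat}(n,m)$, and $\operatorname{Sub}_Z(n,m)$ are primitive recursive.
   Context: Fibonacci numbers: $F_1=1$, $F_2=2$, $F_n=F_{n-1}+F_{n-2}$. Each $n$ has a unique Zeckendorf representation $n=\sum_{e\in S}F_e$ with no two consecutive indices; $Z(n)=S$, listed $e_1>e_2>\cdots$. Cantor pairing $\mathrm{pair}(x,y)=\frac{(x+y)(x+y+1)}{2}+x$ with inverse $\mathrm{unpair}$. $\operatorname{Seq}_Z([a_1,\dots,a_m])=\sum_{i=1}^m F_{2\,\mathrm{pair}(a_i,i)+1}$, empty sequence $\mapsto 0$. $\operatorname{IsCode}(n)$ holds iff $Z(n)$ consists of odd indices with gaps of at least 2. $\operatorname{Len}(n)=|Z(n)|$ if $\operatorname{IsCode}(n)$, else $0$. $\operatorname{SymbolAt}(n,i)=a$ if $\operatorname{IsCode}(n)$, $1\le i\le\operatorname{Len}(n)$ and the $i$-th index $e_i$ (in decreasing order) satisfies $\mathrm{unpair}((e_i-1)/2)=(a,i)$; otherwise $0$. For valid codes $n,m$ decoding to sequences $[a_1,\dots,a_k]$ and $[b_1,\dots,b_l]$, $\operatorname{Concat}(n,m)=\operatorname{Seq}_Z([a_1,\dots,a_k,b_1,\dots,b_l])$. Formulas and terms of a fixed first-order language are coded by $\operatorname{Seq}_Z$ of their sequences of symbol numbers; for $n$ coding a formula $\varphi(x)$ with free variable $x$ and $m$ coding a term $t$, $\operatorname{Sub}_Z(n,m)$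 is obtained by decoding $n$ to its symbol sequence, replacing each occurrence of $\ulcorner x\urcorner$ by the decoded symbol sequence of $m$, and re-encoding via $\operatorname{Seq}_Z$. *)

From mathcomp Require Import all_boot.
Set Implicit Arguments. Unset Strict Implicit. Unset Printing Implicit Defensive.

Definition prec k (g : k.-tuple nat -> nat) (h : k.+2.-tuple nat -> nat)
    (v : k.+1.-tuple nat) : nat :=
  let w := behead_tuple v in
  (fix F (n : nat) : nat :=
     match n with
     | 0 => g w
     | n'.+1 => h (cons_tuple n' (cons_tuple (F n') w))
     end) (thead v).

Inductive PRf : forall k : nat, (k.-tuple nat -> nat) -> Prop :=
| PRf_zero k : @PRf k (fun _ => 0)
| PRf_succ : @PRf 1 (fun v => (thead v).+1)
| PRf_proj k (i : 'I_k) : @PRf k (fun v => tnth v i)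
| PRf_comp k m (g : m.-tuple nat -> nat) (h : 'I_m -> k.-tuple nat -> nat) :
    @PRf m g -> (forall i, @PRf k (h i)) ->
    @PRf k (fun v => g [tuple h i v | i < m])
| PRf_rec k (g : k.-tuple nat -> nat) (h : k.+2.-tuple nat -> nat) :
    @PRf k g -> @PRf k.+2 h -> @PRf k.+1 (prec g h).

Definition primrec k (f : k.-tuple nat -> nat) : Prop :=
  exists g, @PRf k g /\ forall v, g v = f v.

Definition primrec1 (f : nat -> nat) : Prop :=
  @primrec 1 (fun v => f (tnth v ord0)).
Definition primrec2 (f : nat -> nat -> nat) : Prop :=
  @primrec 2 (fun v => f (tnth v ord0) (tnth v (lift ord0 ord0))).
Definition primrec_pred1 (P : nat -> bool) : Prop :=
  primrec1 (fun n => nat_of_bool (P n)).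

(* ---------- Fibonacci numbers F_1 = 1, F_2 = 2 (F_0 := 1 is unused) ---------- *)
Fixpoint fibp (n : nat) : nat * nat :=
  match n with
  | 0 => (1, 1)
  | n'.+1 => let p := fibp n' in (p.2, p.2 + p.1)
  end.
Definition fib (n : nat) : nat := (fibp n).1.

(* greedy step: the largest index e >= 1 with F_e <= n (for n >= 1).
   Since F is increasing (F_1 < F_2 < ...), we count e upward from 1 while
   F_(e+1) <= n; the fuel n suffices because F_e >= e. *)
Fixpoint zeck_top_aux (fuel e n : nat) : nat :=
  match fuel with
  | 0 => e
  | fuel'.+1 => if fib e.+1 <= n then zeck_top_aux fuel' e.+1 n else e
  end.
Definition zeck_top (n : nat) : nat := zeck_top_aux n 1 n.

Fixpoint zeck_rec (fuel n : nat) : seq nat :=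
  match fuel with
  | 0 => [::]
  | fuel'.+1 =>
      if n == 0 then [::]
      else zeck_top n :: zeck_rec fuel' (n - fib (zeck_top n))
  end.

Definition zeck (n : nat) : seq nat := zeck_rec n n.

Definition cpair (x y : nat) : nat := (x + y) * (x + y + 1) %/ 2 + x.

Definition tri (w : nat) : nat := w * (w + 1) %/ 2.
Definition cunpair (z : nat) : nat * nat :=
  let w := foldr maxn 0 [seq w <- iota 0 z.+1 | tri w <= z] in
  (z - tri w, w - (z - tri w)).

Definition SeqZ (s : seq nat) : nat :=
  sumn [seq fib (2 * cpair (nth 0 s i) i.+1 + 1) | i <- iota 0 (size s)].

Definition IsCode (n : nat) : bool :=
  all odd (zeck n) && sorted (fun a b => b + 2 <= a) (zeck n).

Definition Len (n : nat) : nat := if IsCode n then size (zeck n) else 0.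

(* SymbolAt n i = a where e is an index of Z(n) with unpair((e-1)/2) = (a,i)
   (the first such e in decreasing order, if several); 0 if there is none,
   if n is not a code, or if i is out of range. *)
Definition SymbolAt (n i : nat) : nat :=
  if IsCode n && (1 <= i <= Len n) then
    let ps := [seq cunpair ((e - 1) %/ 2) | e <- zeck n] in
    (nth (0, 0) ps (find (fun ai => ai.2 == i) ps)).1
  else 0.

Definition decode (n : nat) : seq nat := [seq SymbolAt n i | i <- iota 1 (Len n)].

Definition Concat (n m : nat) : nat := SeqZ (decode n ++ decode m).

(* vx is the symbol number of the variable x *)
Definition SubZ (vx : nat) (n m : nat) : nat :=
  SeqZ (flatten [seq (if a == vx then decode m else [:: a]) | a <- decode n]).

From mathcomp Require Import all_boot zify.
From Stdlib Require Import FunctionalExtensionality.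
Set Implicit Arguments. Unset Strict Implicit. Unset Printing Implicit Defensive.

(* Each of the five functions has a closed form built from arithmetic, iteration, and
   sums, products, maxima, counts and least witnesses over initial segments [0, b); [PRf]
   is closed under all of these, so the closed form is primitive recursive.
   The Zeckendorf digits are made explicit by iterating the greedy step
   r |-> r - F_(top r), where top r - 1 counts the Fibonacci numbers F_2, F_3, ... not
   exceeding r. Since 0 is a fixed point of the step, the nonzero remainders form an
   initial segment, so Z(n) is the list of the tops of the first few remainders. Fibonacci
   numbers themselves come from iterating (a, b) |-> (b, a + b) on Cantor codes, and
   Seq_Z of a concatenation or substitution splits into sums over the blocks, each
   shifted by the total length of the preceding ones. *)

(** * Closure properties of [PRf] *)

Lemma PRf_ext k (f g : k.-tuple nat -> nat) : PRf f -> f =1 g -> PRf g.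
Proof. by move=> Hf /functional_extensionality <-. Qed.

Lemma PRf_eq k (f g : k.-tuple nat -> nat) : f =1 g -> PRf g -> PRf f.
Proof. by move=> /functional_extensionality ->. Qed.

Lemma PRf_comp_nth k m (g : m.-tuple nat -> nat) (h : nat -> k.-tuple nat -> nat)
    (f : k.-tuple nat -> nat) :
  PRf g -> (forall i, i < m -> PRf (h i)) ->
  (forall v (w : m.-tuple nat), (forall i, i < m -> nth 0 w i = h i v) -> f v = g w) ->
  PRf f.
Proof.
move=> Hg Hh Hf; apply: PRf_ext (PRf_comp Hg (fun i : 'I_m => Hh i (ltn_ord i))) _ => v.
symmetry; apply: Hf => i lt_im.
by rewrite -(tnth_nth 0 _ (Ordinal lt_im)) tnth_mktuple.
Qed.

Lemma pr_nth k i : PRf (fun v : k.-tuple nat => nth 0 v i).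
Proof.
case: (ltnP i k) => [lt_ik | le_ki].
  by apply: PRf_ext (PRf_proj (Ordinal lt_ik)) _ => v; rewrite (tnth_nth 0).
by apply: PRf_ext (PRf_zero k) _ => v; rewrite nth_default ?size_tuple.
Qed.

Lemma pr_succ k (a : k.-tuple nat -> nat) : PRf a -> PRf (fun v => (a v).+1).
Proof.
move=> Ha; apply: (PRf_comp_nth (h := fun _ => a) PRf_succ) => // v w /(_ 0 isT) w0.
by rewrite /thead (tnth_nth 0) w0.
Qed.

Lemma pr_const k c : PRf (fun _ : k.-tuple nat => c).
Proof. by elim: c => [|c IHc]; [exact: PRf_zero | exact: pr_succ]. Qed.

Lemma pr_behead k (a : k.-tuple nat -> nat) :
  PRf a -> PRf (fun u : k.+1.-tuple nat => a (behead_tuple u)).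
Proof.
move=> Ha; apply: (PRf_comp_nth (h := fun i u => nth 0 u i.+1) Ha) => [i _|u w Ew].
  exact: pr_nth.
by congr a; apply: eq_from_tnth => i; rewrite !(tnth_nth 0) Ew // nth_behead.
Qed.

Lemma behead_cons k n (v : k.-tuple nat) : behead_tuple (cons_tuple n v) = v.
Proof. exact: val_inj. Qed.

Lemma pr_drop_snd k (f : k.+1.-tuple nat -> nat) :
  PRf f ->
  PRf (fun u : k.+2.-tuple nat => f (cons_tuple (nth 0 u 0) (behead_tuple (behead_tuple u)))).
Proof.
move=> Hf; apply: (PRf_comp_nth (h := fun i u => nth 0 u (if i is 0 then 0 else i.+1)) Hf).
  by move=> i _; exact: pr_nth.
move=> u w Ew; congr f; apply: eq_from_tnth => i; rewrite !(tnth_nth 0) Ew //.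
by case: i => -[|i] //= _; rewrite !nth_behead.
Qed.

Lemma prec_cons k (g : k.-tuple nat -> nat) (h : k.+2.-tuple nat -> nat) n v :
  prec g h (cons_tuple n v) = iteri n (fun m r => h (cons_tuple m (cons_tuple r v))) (g v).
Proof. by rewrite /prec behead_cons theadE; elim: n => //= n ->. Qed.

Lemma pr_iteri k (x g : k.-tuple nat -> nat) (S : k.-tuple nat -> nat -> nat -> nat) :
  PRf x -> PRf g ->
  PRf (fun u : k.+2.-tuple nat => S (behead_tuple (behead_tuple u)) (nth 0 u 0) (nth 0 u 1)) ->
  PRf (fun v => iteri (x v) (S v) (g v)).
Proof.
move=> Hx Hg HS.
apply: (PRf_comp_nth (h := fun i => if i is i'.+1 then nth 0^~ i' else x) (PRf_rec Hg HS)).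
  by case=> [|i] _; [exact: Hx | exact: pr_nth].
move=> v w Ew; have -> : w = cons_tuple (x v) v.
  by apply: eq_from_tnth => i; rewrite !(tnth_nth 0) Ew //; case: i => -[|i].
by rewrite prec_cons; apply: eq_iteri => n r; rewrite !behead_cons.
Qed.

Lemma iter_iteri T n (f : T -> T) x : iter n f x = iteri n (fun _ => f) x.
Proof. by elim: n => //= n ->. Qed.

Lemma pr_iter k (x g : k.-tuple nat -> nat) (S : k.-tuple nat -> nat -> nat) :
  PRf x -> PRf g -> PRf (fun u : k.+1.-tuple nat => S (behead_tuple u) (nth 0 u 0)) ->
  PRf (fun v => iter (x v) (S v) (g v)).
Proof.
move=> Hx Hg HS; apply: PRf_ext (pr_iteri (S := fun v _ => S v) Hx Hg _) _.
  by apply: PRf_ext (pr_behead HS) _ => u; rewrite /= nth_behead.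
by move=> v; rewrite iter_iteri.
Qed.

Create HintDb primrec discriminated.
(* Unfolding constants during the search would let [pr_if] match [nat_of_bool b]
   (= [if b then 1 else 0]) and loop. *)
Hint Constants Opaque : primrec.
Hint Resolve pr_const pr_nth pr_behead pr_succ pr_iteri pr_iter : primrec.
Ltac primrec := typeclasses eauto with primrec.

Lemma pr_add k (a b : k.-tuple nat -> nat) : PRf a -> PRf b -> PRf (fun v => a v + b v).
Proof.
move=> Ha Hb; apply: PRf_ext (pr_iter (S := fun _ r => r.+1) Ha Hb _) _; first by primrec.
by move=> v /=; elim: (a v) => //= n ->.
Qed.

Lemma pr_pred k (a : k.-tuple nat -> nat) : PRf a -> PRf (fun v => (a v).-1).
Proof.
move=> Ha; apply: PRf_ext (pr_iteri (S := fun _ n _ => n) Ha (pr_const _ 0) _) _.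
  by primrec.
by move=> v /=; case: (a v).
Qed.

Hint Resolve pr_add pr_pred : primrec.

Lemma pr_sub k (a b : k.-tuple nat -> nat) : PRf a -> PRf b -> PRf (fun v => a v - b v).
Proof.
move=> Ha Hb; apply: PRf_ext (pr_iter (S := fun _ r => r.-1) Hb Ha _) _; first by primrec.
by move=> v /=; elim: (b v) => [|n IHn] /=; rewrite ?subn0 ?subnS ?IHn.
Qed.

Lemma pr_mul k (a b : k.-tuple nat -> nat) : PRf a -> PRf b -> PRf (fun v => a v * b v).
Proof.
move=> Ha Hb.
apply: PRf_ext (pr_iter (S := fun v r => r + b v) Ha (pr_const _ 0) _) _; first by primrec.
by move=> v /=; elim: (a v) => //= n ->; rewrite mulSn addnC.
Qed.

Hint Resolve pr_sub pr_mul : primrec.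

Lemma pr_leq k (a b : k.-tuple nat -> nat) : PRf a -> PRf b -> PRf (fun v => a v <= b v).
Proof.
move=> Ha Hb; apply: PRf_ext (pr_sub (pr_const _ 1) (pr_sub Ha Hb)) _ => v.
by rewrite /leq; case: (a v - b v).
Qed.

Lemma pr_odd k (a : k.-tuple nat -> nat) : PRf a -> PRf (fun v => odd (a v)).
Proof.
move=> Ha; apply: PRf_ext (pr_iter (S := fun _ r => 1 - r) Ha (pr_const _ 0) _) _.
  by primrec.
by move=> v /=; elim: (a v) => //= n ->; case: (odd n).
Qed.

Lemma pr_maxn k (a b : k.-tuple nat -> nat) : PRf a -> PRf b -> PRf (fun v => maxn (a v) (b v)).
Proof. by move=> Ha Hb; apply: PRf_ext (pr_add Ha (pr_sub Hb Ha)) _ => v; rewrite maxnE. Qed.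

Section BooleanConnectives.
Variables (k : nat) (p q : k.-tuple nat -> bool).
Hypotheses (Hp : PRf (fun v => p v)) (Hq : PRf (fun v => q v)).

Lemma pr_and : PRf (fun v => p v && q v).
Proof. by apply: PRf_ext (pr_mul Hp Hq) _ => v; case: (p v); rewrite ?mul0n ?mul1n. Qed.

Lemma pr_neg : PRf (fun v => ~~ p v).
Proof. by apply: PRf_ext (pr_sub (pr_const _ 1) Hp) _ => v; case: (p v). Qed.

Lemma pr_if (a b : k.-tuple nat -> nat) :
  PRf a -> PRf b -> PRf (fun v => if p v then a v else b v).
Proof.
move=> Ha Hb; apply: PRf_ext (pr_add (pr_mul Hp Ha) (pr_mul pr_neg Hb)) _ => v.
by case: (p v); rewrite /= ?mul1n ?mul0n ?addn0.
Qed.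

End BooleanConnectives.

Lemma pr_eq k (a b : k.-tuple nat -> nat) : PRf a -> PRf b -> PRf (fun v => a v == b v).
Proof.
move=> Ha Hb; apply: PRf_ext (pr_and (pr_leq Ha Hb) (pr_leq Hb Ha)) _ => v.
by rewrite eqn_leq.
Qed.

Hint Resolve pr_leq pr_odd pr_maxn pr_and pr_neg pr_if pr_eq : primrec.

Lemma pr_big k idx (op : Monoid.law idx) (F : nat -> k.-tuple nat -> nat) b :
  (forall a c : k.+2.-tuple nat -> nat, PRf a -> PRf c -> PRf (fun u => op (a u) (c u))) ->
  PRf (fun u : k.+1.-tuple nat => F (nth 0 u 0) (behead_tuple u)) -> PRf b ->
  PRf (fun v => \big[op/idx]_(0 <= j < b v) F j v).
Proof.
move=> Hop HF Hb.
have HF2 : PRf (fun u : k.+2.-tuple nat => F (nth 0 u 0) (behead_tuple (behead_tuple u))).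
  by apply: PRf_ext (pr_drop_snd HF) _ => u; rewrite behead_cons.
apply: PRf_ext (pr_iteri (S := fun v j r => op r (F j v)) Hb (pr_const _ idx) _) _.
  exact: Hop (pr_nth _ 1) HF2.
move=> v /=; elim: (b v) => [|n IHn]; first by rewrite big_geq.
by rewrite big_nat_recr //= IHn.
Qed.

Section BigOperators.
Variables (k : nat) (F : nat -> k.-tuple nat -> nat) (b : k.-tuple nat -> nat).
Hypotheses (HF : PRf (fun u : k.+1.-tuple nat => F (nth 0 u 0) (behead_tuple u)))
           (Hb : PRf b).

Lemma pr_sum : PRf (fun v => \sum_(0 <= j < b v) F j v).
Proof. exact: pr_big (@pr_add _) HF Hb. Qed.

Lemma pr_prod : PRf (fun v => \prod_(0 <= j < b v) F j v).
Proof. exact: pr_big (@pr_mul _) HF Hb. Qed.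

Lemma pr_bigmax : PRf (fun v => \max_(0 <= j < b v) F j v).
Proof. exact: pr_big (@pr_maxn _) HF Hb. Qed.

End BigOperators.

Hint Resolve pr_sum pr_prod pr_bigmax : primrec.

Lemma count_sum T (p : pred T) s : count p s = \sum_(x <- s) p x.
Proof. by rewrite -sum1_count big_mkcond. Qed.

Lemma all_prod T (p : pred T) s : all p s = \prod_(x <- s) p x :> nat.
Proof.
elim: s => [|x s IHs]; first by rewrite big_nil.
by rewrite big_cons -IHs /=; case: (p x); rewrite ?mul1n ?mul0n.
Qed.

Lemma find_iota p n : find p (iota 0 n) = \sum_(0 <= i < n) all (predC p) (iota 0 i.+1).
Proof.
elim: n => [|n IHn]; first by rewrite big_geq.
have iotaSr m : iota 0 m.+1 = iota 0 m ++ [:: m] by rewrite -addn1 iotaD.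
rewrite big_nat_recr // -IHn iotaSr find_cat all_cat /= andbT.
have [/hasP[j j_lt p_j] | no_p] := boolP (has p (iota 0 n)).
  suff /negbTE-> : ~~ all (predC p) (iota 0 n) by rewrite addn0.
  by apply/allPn; exists j; rewrite //= negbK.
rewrite (hasNfind no_p) size_iota; have -> : all (predC p) (iota 0 n).
  by apply/allP=> j j_lt; apply: contraNN no_p => p_j; apply/hasP; exists j.
by case: (p n).
Qed.

Section BoundedQuantifiers.
Variables (k : nat) (P : nat -> k.-tuple nat -> bool) (b : k.-tuple nat -> nat).
Hypotheses (HP : PRf (fun u : k.+1.-tuple nat => P (nth 0 u 0) (behead_tuple u)))
           (Hb : PRf b).

Lemma pr_count : PRf (fun v => count (P^~ v) (iota 0 (b v))).
Proof. by apply: PRf_ext (pr_sum HP Hb) _ => v; rewrite count_sum /index_iota subn0. Qed.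

Lemma pr_all : PRf (fun v => all (P^~ v) (iota 0 (b v))).
Proof. by apply: PRf_ext (pr_prod HP Hb) _ => v; rewrite all_prod /index_iota subn0. Qed.

End BoundedQuantifiers.

Lemma pr_find k (P : nat -> k.-tuple nat -> bool) b :
  PRf (fun u : k.+1.-tuple nat => P (nth 0 u 0) (behead_tuple u)) -> PRf b ->
  PRf (fun v => find (P^~ v) (iota 0 (b v))).
Proof.
move=> HP Hb.
have HP2 : PRf (fun u : k.+2.-tuple nat => ~~ P (nth 0 u 0) (behead_tuple (behead_tuple u))).
  by apply: pr_neg; apply: PRf_ext (pr_drop_snd HP) _ => u; rewrite behead_cons.
apply: PRf_ext (pr_sum (F := fun i v => all (fun j => ~~ P j v) (iota 0 i.+1)) _ Hb) _.
  by apply: pr_all HP2 _; primrec.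
by move=> v; rewrite find_iota.
Qed.

Hint Resolve pr_count pr_all pr_find : primrec.

Lemma sum_ltn m q : \sum_(0 <= j < m) (j < q) = minn q m.
Proof.
elim: m => [|m IHm]; first by rewrite big_geq ?minn0.
by rewrite big_nat_recr //= IHm; case: ltnP; lia.
Qed.

Lemma divn_count m d : 0 < d -> m %/ d = \sum_(0 <= j < m) (j.+1 * d <= m).
Proof.
move=> d_gt0; under eq_bigr => j _ do rewrite -leq_divRL //.
by rewrite sum_ltn; apply/esym/minn_idPl; rewrite leq_div.
Qed.

Lemma pr_div k (a b : k.-tuple nat -> nat) : PRf a -> PRf b -> PRf (fun v => a v %/ b v).
Proof.
move=> Ha Hb.
apply: PRf_ext (pr_mul (pr_leq (pr_const _ 1) Hb)
                       (pr_sum (F := fun j v => j.+1 * b v <= a v) _ Ha)) _.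
  by primrec.
move=> v /=; case: (posnP (b v)) => [->|b_gt0]; first by rewrite divn0.
by rewrite mul1n divn_count.
Qed.

Hint Resolve pr_div : primrec.

(** * Cantor pairing and Fibonacci numbers *)

Definition tri_root z := \max_(0 <= w < z.+1 | tri w <= z) w.

Lemma tri_rootE z : tri_root z = \max_(0 <= w < z.+1) (if tri w <= z then w else 0).
Proof. exact: big_mkcond. Qed.

Lemma cunpairE z : cunpair z = (z - tri (tri_root z), tri_root z - (z - tri (tri_root z))).
Proof.
rewrite /cunpair; suff -> : foldr maxn 0 [seq w <- iota 0 z.+1 | tri w <= z] = tri_root z by [].
by rewrite /tri_root -big_filter /index_iota subn0 unlock.
Qed.

Lemma triS w : tri w.+1 = tri w + w.+1.
Proof.
rewrite /tri (_ : w.+1 * (w.+1 + 1) = w.+1 * 2 + w * (w + 1)); last by lia.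
by rewrite divnMDl // addnC.
Qed.

Lemma leq_tri : {homo tri : m n / m <= n}.
Proof. by move=> m n le_mn; rewrite /tri leq_div2r // leq_mul // leq_add2r. Qed.

Lemma tri_root_tri_add s x : x <= s -> tri_root (tri s + x) = s.
Proof.
move=> le_xs; have tri_le w : (tri w <= tri s + x) = (w <= s).
  case: (leqP w s) => [le_ws | lt_sw]; first exact: leq_trans (leq_tri le_ws) (leq_addr _ _).
  by apply/negbTE; rewrite -ltnNge (leq_trans _ (leq_tri lt_sw)) // triS ltn_add2l ltnS.
rewrite /tri_root (eq_bigl _ _ tri_le); apply/eqP; rewrite eqn_leq.
apply/andP; split; first by apply/bigmax_leqP_seq.
apply: leq_bigmax_seq => //; rewrite mem_index_iota ltnS.
by rewrite (leq_trans _ (leq_addr _ _)) // /tri leq_divRL //; nia.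
Qed.

Lemma cpairK x y : cunpair (cpair x y) = (x, y).
Proof.
rewrite cunpairE (_ : cpair x y = tri (x + y) + x) // tri_root_tri_add ?leq_addr //.
by congr pair; lia.
Qed.

Lemma pr_tri k (a : k.-tuple nat -> nat) : PRf a -> PRf (fun v => tri (a v)).
Proof. by rewrite /tri; primrec. Qed.

Hint Resolve pr_tri : primrec.

Lemma pr_tri_root k (a : k.-tuple nat -> nat) : PRf a -> PRf (fun v => tri_root (a v)).
Proof. by move=> Ha; apply: (PRf_eq (fun v => tri_rootE (a v))); primrec. Qed.

Lemma pr_cpair k (a b : k.-tuple nat -> nat) : PRf a -> PRf b -> PRf (fun v => cpair (a v) (b v)).
Proof. by rewrite /cpair; primrec. Qed.

Hint Resolve pr_tri_root pr_cpair : primrec.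

Lemma pr_cunpair1 k (a : k.-tuple nat -> nat) : PRf a -> PRf (fun v => (cunpair (a v)).1).
Proof. by move=> Ha; apply: (PRf_eq (fun v => congr1 fst (cunpairE (a v)))) => /=; primrec. Qed.

Lemma pr_cunpair2 k (a : k.-tuple nat -> nat) : PRf a -> PRf (fun v => (cunpair (a v)).2).
Proof. by move=> Ha; apply: (PRf_eq (fun v => congr1 snd (cunpairE (a v)))) => /=; primrec. Qed.

Hint Resolve pr_cunpair1 pr_cunpair2 : primrec.

Lemma pr_iter_pair k (x : k.-tuple nat -> nat) (f : nat * nat -> nat * nat) p0 :
  (forall m (a b : m.-tuple nat -> nat), PRf a -> PRf b -> PRf (fun v => (f (a v, b v)).1)) ->
  (forall m (a b : m.-tuple nat -> nat), PRf a -> PRf b -> PRf (fun v => (f (a v, b v)).2)) ->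
  PRf x -> PRf (fun v => (iter (x v) f p0).1).
Proof.
move=> Hf1 Hf2 Hx.
pose step c := let p := f ((cunpair c).1, (cunpair c).2) in cpair p.1 p.2.
have iter_step n : iter n step (cpair p0.1 p0.2) = cpair (iter n f p0).1 (iter n f p0).2.
  by elim: n => //= n ->; rewrite /step cpairK /= -surjective_pairing.
have Hstep : PRf (fun u : k.+1.-tuple nat => step (nth 0 u 0)).
  by apply: pr_cpair; [apply: Hf1 | apply: Hf2]; primrec.
have iter_fst n : (iter n f p0).1 = (cunpair (iter n step (cpair p0.1 p0.2))).1.
  by rewrite iter_step cpairK.
by apply: (PRf_eq (fun v => iter_fst (x v))); primrec.
Qed.

Lemma fibpE n : fibp n = iter n (fun p => (p.2, p.2 + p.1)) (1, 1).
Proof. by elim: n => //= n ->. Qed.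

Lemma pr_fib k (a : k.-tuple nat -> nat) : PRf a -> PRf (fun v => fib (a v)).
Proof.
move=> Ha; apply: (PRf_eq (fun v => congr1 fst (fibpE (a v)))).
by apply: pr_iter_pair => // m b c Hb Hc /=; primrec.
Qed.

Hint Resolve pr_fib : primrec.

(** * Zeckendorf representation *)

Lemma leq_fib : {homo fib : m n / m <= n}.
Proof. by apply: homo_leq => [//|n m p|[|n] //]; [exact: leq_trans | rewrite /fib /= leq_addr]. Qed.

Lemma zeck_top_auxE fuel e n :
  zeck_top_aux fuel e n = e + \sum_(0 <= j < fuel) (fib (e + j.+1) <= n).
Proof.
elim: fuel e => [|fuel IHfuel] e /=; first by rewrite big_geq ?addn0.
rewrite big_nat_recl //= addn1; case: ifP => [fib_le | fib_gt].
  by rewrite IHfuel add1n addSn addnS; under eq_bigr do rewrite addSnnS.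
rewrite add0n big1_seq ?addn0 // => j _.
suff /negbTE-> : ~~ (fib (e + j.+2) <= n) by [].
rewrite -ltnNge; apply: leq_trans (leq_fib (_ : e.+1 <= e + j.+2)); last by lia.
by rewrite ltnNge fib_gt.
Qed.

Lemma zeck_topE n : zeck_top n = 1 + \sum_(0 <= j < n) (fib j.+2 <= n).
Proof. exact: zeck_top_auxE. Qed.

Lemma pr_zeck_top k (a : k.-tuple nat -> nat) : PRf a -> PRf (fun v => zeck_top (a v)).
Proof. by move=> Ha; apply: (PRf_eq (fun v => zeck_topE (a v))); primrec. Qed.

Hint Resolve pr_zeck_top : primrec.

Definition zeck_step r := r - fib (zeck_top r).
Definition zeck_at n j := zeck_top (iter j zeck_step n).
Definition zeck_len n := count (fun j => iter j zeck_step n != 0) (iota 0 n).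

Lemma iter_zeck_step0 j : iter j zeck_step 0 = 0.
Proof. by elim: j => //= j ->. Qed.

Lemma zeck_recE fuel i m :
  zeck_rec fuel (iter i zeck_step m) =
  [seq zeck_top (iter j zeck_step m) | j <- iota i fuel & iter j zeck_step m != 0].
Proof.
elim: fuel i => [|fuel IHfuel] i //=.
case: eqP => [iter_i0 | _] /=; last by congr (_ :: _); exact: (IHfuel i.+1).
rewrite (@eq_in_filter _ _ pred0) ?filter_pred0 // => j; rewrite mem_iota => /andP[lt_ij _].
by rewrite -(subnK (ltnW lt_ij)) iterD iter_i0 iter_zeck_step0.
Qed.

Lemma filter_iota_downward (P : pred nat) n : (forall j, P j.+1 -> P j) ->
  [seq j <- iota 0 n | P j] = iota 0 (count P (iota 0 n)).
Proof.
move=> P_down; have P_le m j : j <= m -> P m -> P j.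
  by move=> le_jm; rewrite -(subnK le_jm); elim: (m - j) => // d IHd /P_down.
elim: n => [|n IHn] //; rewrite -addn1 iotaD filter_cat count_cat IHn /=.
case: ifP => [Pn|_]; last by rewrite !addn0 cats0.
suff /eqP-> : count P (iota 0 n) == n by rewrite addn0 iotaD.
rewrite -[n in _ == n](size_iota 0) -all_count.
by apply/allP => j; rewrite mem_iota => /andP[_ lt_jn]; exact: P_le (ltnW lt_jn) Pn.
Qed.

Lemma zeck_mkseq n : zeck n = mkseq (zeck_at n) (zeck_len n).
Proof.
rewrite /zeck -[n in zeck_rec _ n]/(iter 0 zeck_step n) zeck_recE filter_iota_downward // => j.
by apply: contraNN => /eqP j_zero; rewrite iterS j_zero.
Qed.

Lemma pr_zeck_step k (a : k.-tuple nat -> nat) : PRf a -> PRf (fun v => zeck_step (a v)).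
Proof. by rewrite /zeck_step; primrec. Qed.

Hint Resolve pr_zeck_step : primrec.

Lemma pr_zeck_at k (a b : k.-tuple nat -> nat) :
  PRf a -> PRf b -> PRf (fun v => zeck_at (a v) (b v)).
Proof. by rewrite /zeck_at; primrec. Qed.

Lemma pr_zeck_len k (a : k.-tuple nat -> nat) : PRf a -> PRf (fun v => zeck_len (a v)).
Proof. by move=> Ha; rewrite /zeck_len; primrec. Qed.

Hint Resolve pr_zeck_at pr_zeck_len : primrec.

Lemma sorted_mkseq (r : rel nat) f n :
  sorted r (mkseq f n) = all (fun j => r (f j) (f j.+1)) (iota 0 n.-1).
Proof.
case: n => [|n] //; rewrite /mkseq; elim: n 0 => [|n IHn] i //=.
by rewrite -IHn.
Qed.

Lemma IsCodeE n :
  IsCode n = all (fun j => odd (zeck_at n j)) (iota 0 (zeck_len n)) &&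
             all (fun j => zeck_at n j.+1 + 2 <= zeck_at n j) (iota 0 (zeck_len n).-1).
Proof. by rewrite /IsCode zeck_mkseq sorted_mkseq all_map. Qed.

Lemma LenE n : Len n = if IsCode n then zeck_len n else 0.
Proof. by rewrite /Len zeck_mkseq size_mkseq. Qed.

Lemma pr_IsCode k (a : k.-tuple nat -> nat) : PRf a -> PRf (fun v => IsCode (a v)).
Proof. by move=> Ha; apply: (PRf_eq (fun v => congr1 nat_of_bool (IsCodeE (a v)))); primrec. Qed.

Hint Resolve pr_IsCode : primrec.

Lemma pr_Len k (a : k.-tuple nat -> nat) : PRf a -> PRf (fun v => Len (a v)).
Proof. by move=> Ha; apply: (PRf_eq (fun v => LenE (a v))); primrec. Qed.

Hint Resolve pr_Len : primrec.

Definition zeck_pair n j := cunpair ((zeck_at n j - 1) %/ 2).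
Definition symbol_pos n i := find (fun j => (zeck_pair n j).2 == i) (iota 0 (zeck_len n)).

Lemma SymbolAtE n i :
  SymbolAt n i = if IsCode n && (1 <= i <= Len n) then
                   if symbol_pos n i < zeck_len n then (zeck_pair n (symbol_pos n i)).1 else 0
                 else 0.
Proof.
rewrite /SymbolAt zeck_mkseq -map_comp find_map -/(symbol_pos n i); case: ifP => // _.
case: ltnP => [lt_pos | le_pos]; last by rewrite nth_default // size_map size_iota.
by rewrite (nth_map 0) ?size_iota // nth_iota.
Qed.

Lemma pr_symbol_pos k (a b : k.-tuple nat -> nat) :
  PRf a -> PRf b -> PRf (fun v => symbol_pos (a v) (b v)).
Proof. by rewrite /symbol_pos /zeck_pair; primrec. Qed.

Hint Resolve pr_symbol_pos : primrec.

Lemma pr_SymbolAt k (a b : k.-tuple nat -> nat) :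
  PRf a -> PRf b -> PRf (fun v => SymbolAt (a v) (b v)).
Proof.
move=> Ha Hb; apply: (PRf_eq (fun v => SymbolAtE (a v) (b v))).
by rewrite /zeck_pair; primrec.
Qed.

Hint Resolve pr_SymbolAt : primrec.

(** * Sequence codes *)

Definition seqz_term a i := fib (2 * cpair a i + 1).
Definition seqz_from o s := \sum_(0 <= i < size s) seqz_term (nth 0 s i) (o + i).

Lemma SeqZE s : SeqZ s = seqz_from 1 s.
Proof. by rewrite /SeqZ sumnE big_map /seqz_from /index_iota subn0. Qed.

Lemma seqz_from_cat o s1 s2 :
  seqz_from o (s1 ++ s2) = seqz_from o s1 + seqz_from (o + size s1) s2.
Proof.
rewrite /seqz_from size_cat (big_cat_nat _ (leq_addr _ _)) //=; congr (_ + _).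
  by apply: eq_big_nat => i /andP[_ lt_i]; rewrite nth_cat lt_i.
rewrite -{1}[size s1]add0n big_addn addKn; apply: eq_bigr => i _.
by rewrite nth_cat ltnNge leq_addl /= addnK [i + _]addnC addnA.
Qed.

Lemma seqz_from_mkseq o f n :
  seqz_from o (mkseq f n) = \sum_(0 <= i < n) seqz_term (f i) (o + i).
Proof.
by rewrite /seqz_from size_mkseq; apply: eq_big_nat => i /andP[_ lt_in]; rewrite nth_mkseq.
Qed.

Lemma seqz_from_flatten_mkseq o (B : nat -> seq nat) n :
  seqz_from o (flatten (mkseq B n)) =
  \sum_(0 <= j < n) seqz_from (o + \sum_(0 <= i < j) size (B i)) (B j).
Proof.
elim: n => [|n IHn]; first by rewrite /seqz_from !big_geq.
rewrite mkseqS flatten_rcons seqz_from_cat IHn big_nat_recr //=.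
by rewrite size_flatten /shape /mkseq -map_comp sumnE big_map /index_iota subn0.
Qed.

Lemma pr_seqz_term k (a b : k.-tuple nat -> nat) :
  PRf a -> PRf b -> PRf (fun v => seqz_term (a v) (b v)).
Proof. by rewrite /seqz_term; primrec. Qed.

Hint Resolve pr_seqz_term : primrec.

Lemma decode_mkseq n : decode n = mkseq (fun i => SymbolAt n i.+1) (Len n).
Proof. by rewrite /decode (iotaDl 1 0) -map_comp. Qed.

Lemma size_decode n : size (decode n) = Len n.
Proof. by rewrite /decode size_map size_iota. Qed.

Lemma seqz_from_decode o n :
  seqz_from o (decode n) = \sum_(0 <= i < Len n) seqz_term (SymbolAt n i.+1) (o + i).
Proof. by rewrite decode_mkseq seqz_from_mkseq. Qed.

Lemma pr_seqz_from_decode k (o a : k.-tuple nat -> nat) :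
  PRf o -> PRf a -> PRf (fun v => seqz_from (o v) (decode (a v))).
Proof. by move=> Ho Ha; apply: (PRf_eq (fun v => seqz_from_decode (o v) (a v))); primrec. Qed.

Hint Resolve pr_seqz_from_decode : primrec.

Lemma ConcatE n m : Concat n m = seqz_from 1 (decode n) + seqz_from (1 + Len n) (decode m).
Proof. by rewrite /Concat SeqZE seqz_from_cat size_decode. Qed.

Lemma pr_Concat k (a b : k.-tuple nat -> nat) :
  PRf a -> PRf b -> PRf (fun v => Concat (a v) (b v)).
Proof. by move=> Ha Hb; apply: (PRf_eq (fun v => ConcatE (a v) (b v))); primrec. Qed.

Definition subst_block (vx m a : nat) : seq nat := if a == vx then decode m else [:: a].

Lemma SubZE vx n m :
  SubZ vx n m =
  \sum_(0 <= j < Len n)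
     seqz_from (1 + \sum_(0 <= i < j) size (subst_block vx m (SymbolAt n i.+1)))
               (subst_block vx m (SymbolAt n j.+1)).
Proof.
by rewrite /SubZ SeqZE -/(subst_block vx m) decode_mkseq /mkseq -map_comp seqz_from_flatten_mkseq.
Qed.

Lemma pr_size_subst_block vx k (m a : k.-tuple nat -> nat) :
  PRf m -> PRf a -> PRf (fun v => size (subst_block vx (m v) (a v))).
Proof.
move=> Hm Ha; apply: (PRf_eq (g := fun v => if a v == vx then Len (m v) else 1)); last by primrec.
by move=> v; rewrite /subst_block; case: ifP; rewrite ?size_decode.
Qed.

Lemma pr_seqz_from_subst_block vx k (o m a : k.-tuple nat -> nat) :
  PRf o -> PRf m -> PRf a -> PRf (fun v => seqz_from (o v) (subst_block vx (m v) (a v))).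
Proof.
move=> Ho Hm Ha.
apply: (PRf_eq (g := fun v => if a v == vx then seqz_from (o v) (decode (m v))
                              else seqz_term (a v) (o v))); last by primrec.
move=> v; rewrite /subst_block; case: ifP => // _.
by rewrite /seqz_from /= big_nat1 addn0.
Qed.

Hint Resolve pr_size_subst_block pr_seqz_from_subst_block : primrec.

Lemma pr_SubZ vx k (a b : k.-tuple nat -> nat) :
  PRf a -> PRf b -> PRf (fun v => SubZ vx (a v) (b v)).
Proof.
(* [pr_behead] strips a single [behead_tuple]; the nested sums of [SubZE] need two. *)
move=> Ha Hb; have Ha2 := pr_behead (pr_behead Ha); have Hb2 := pr_behead (pr_behead Hb).
by apply: (PRf_eq (fun v => SubZE vx (a v) (b v))); primrec.
Qed.

Hint Resolve pr_Concat pr_SubZ : primrec.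

Lemma primrec1_nth f : PRf (fun v : 1.-tuple nat => f (nth 0 v 0)) -> primrec1 f.
Proof. by move=> Hf; exists (fun v => f (nth 0 v 0)); split=> // v; rewrite (tnth_nth 0). Qed.

Lemma primrec2_nth f :
  PRf (fun v : 2.-tuple nat => f (nth 0 v 0) (nth 0 v 1)) -> primrec2 f.
Proof.
by move=> Hf; exists (fun v => f (nth 0 v 0) (nth 0 v 1)); split=> // v; rewrite !(tnth_nth 0).
Qed.

Theorem lemma5p9 :
  primrec_pred1 IsCode /\ primrec1 Len /\ primrec2 SymbolAt /\
  primrec2 Concat /\ (forall vx : nat, primrec2 (SubZ vx)).
Proof.
split; first by apply: primrec1_nth; primrec.
split; first by apply: primrec1_nth; primrec.
split; first by apply: primrec2_nth; primrec.
split; first by apply: primrec2_nth; primrec.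
by move=> vx; apply: primrec2_nth; primrec.
Qed.
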